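(* (1) If $j\in\mathbb Z$ and $p,p'\in X_j$ are distinct points with $\pi_j(p)=\pi_j(p')$, then there is a vertical edge path in the $1$-skeleton of $X_j^{(1)}$ of combinatorial length at most $2$ containing $p$ and $p'$. (2) If $\sigma,\sigma'$ are $2$-cells of $X_j$ with $\pi_j(\sigma)\cap\pi_j(\sigma')\ne\emptyset$, then $\sigma\cap\sigma'\ne\emptyset$. (3) If $j\le j'$ are integers, $\hat\sigma$ is a $2$-cell of $Y_j$ and $\hat\sigma'$ a $2$-cell of $Y_{j'}$, and $\hat\pi^\infty(\hat\sigma)\cap\hat\pi^\infty(\hat\sigma')\ne\emptyset$, then $\hat\pi^{j'}(\hat\sigma)\cap\hat\pi^{j'}(\hat\sigma')\ne\emptyset$.
   Context: Standing construction ($n=2$). Fix an integer $L\ge100$, $m=4$, $m_v=3L$. For $j\in\mathbb Z$, $Y_j$ is the cell complex on $\mathbb R^2$ given by the tiling by rectangles $[am^{-j},(a+1)m^{-j}]\times[bm_v^{-j},(b+1)m_v^{-j}]$, $a,b\in\mathbb Z$; a $1$-cell of $Y_j$ is horizontal if it is a translate of $[0,m^{-j}]\times\{0\}$ and vertical if it is a translate of $\{0\}\times[0,m_v^{-j}]$. Let $\Phi(x,y)=(m^{-1}x,m_v^{-1}y)$. For $k,\ell\in\mathbb Z$, $i\in\{1,2,3\}$, let $a_{k,\ell,i}=\{k+\tfrac i4\}\times[(3\ell+i-1)m_v^{-1},(3\ell+i)m_v^{-1}]$. $\mathcal R$ is the equivalence relation on $\mathbb R^2$ generated by $p\sim p+(0,m_v^{-1})$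 for $p\in a_{k,\ell,i}$. $\Phi^j_*\mathcal R=\{(\Phi^jp,\Phi^jq):(p,q)\in\mathcal R\}$; $\mathcal R_j$ is generated by $\Phi^i_*\mathcal R$, $i<j$; $\mathcal R_\infty$ by all $\Phi^i_*\mathcal R$, $i\in\mathbb Z$. For $j\in\mathbb Z\cup\{\infty\}$, $X_j=\mathbb R^2/\mathcal R_j$, $\hat\pi^j$ the quotient map, $\pi_i^j:X_i\to X_j$ ($i\le j$) induced maps, $\pi_j=\pi_j^{j+1}$. $X_j$ carries the CW structure whose open cells are the images under $\hat\pi^j$ of open cells of $Y_j$; $X_j^{(k)}$ is the subdivision whose cells are images of cells of $Y_{j+k}$, and a $1$-cell of $X_j^{(k)}$ is vertical (horizontal) if it is the image of a vertical (horizontal) $1$-cell of $Y_{j+k}$. *)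

From Stdlib Require Import Reals ZArith List Relations Relation_Operators.
Open Scope R_scope.

Definition pt := (R * R)%type.

Definition m : R := 4.
Definition mv (L : nat) : R := 3 * INR L.

Definition Phi_pow (L : nat) (j : Z) (p : pt) : pt :=
  (powerRZ m (- j) * fst p, powerRZ (mv L) (- j) * snd p).

Definition in_a (L : nat) (k l : Z) (i : nat) (p : pt) : Prop :=
  (1 <= i <= 3)%nat /\
  fst p = IZR k + INR i / 4 /\
  (3 * IZR l + INR i - 1) / mv L <= snd p <= (3 * IZR l + INR i) / mv L.

Definition R0 (L : nat) (p q : pt) : Prop :=
  (exists k l i, in_a L k l i p) /\ q = (fst p, snd p + / mv L).

Definition Rel (L : nat) : relation pt := clos_refl_sym_trans pt (R0 L).

Definition PhiRel (L : nat) (j : Z) (P Q : pt) : Prop :=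
  exists p q, Rel L p q /\ P = Phi_pow L j p /\ Q = Phi_pow L j q.

Definition Rj (L : nat) (j : Z) : relation pt :=
  clos_refl_sym_trans pt (fun P Q => exists i : Z, (i < j)%Z /\ PhiRel L i P Q).

Definition Rinf (L : nat) : relation pt :=
  clos_refl_sym_trans pt (fun P Q => exists i : Z, PhiRel L i P Q).

(* closed 2-cell (a,b) of Y_j *)
Definition cell2 (L : nat) (j a b : Z) (p : pt) : Prop :=
  IZR a * powerRZ m (- j) <= fst p <= (IZR a + 1) * powerRZ m (- j) /\
  IZR b * powerRZ (mv L) (- j) <= snd p <= (IZR b + 1) * powerRZ (mv L) (- j).

Definition vcell (L : nat) (j a b : Z) (p : pt) : Prop :=
  fst p = IZR a * powerRZ m (- j) /\
  IZR b * powerRZ (mv L) (- j) <= snd p <= (IZR b + 1) * powerRZ (mv L) (- j).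

Definition vcell_lo (L : nat) (j a b : Z) : pt :=
  (IZR a * powerRZ m (- j), IZR b * powerRZ (mv L) (- j)).
Definition vcell_hi (L : nat) (j a b : Z) : pt :=
  (IZR a * powerRZ m (- j), (IZR b + 1) * powerRZ (mv L) (- j)).

(* An oriented vertical edge of X_j^{(1)}: the image of the vertical 1-cell
   (a,b) of Y_{j+1}; the boolean gives its orientation. *)
Definition vedge := (Z * Z * bool)%type.

Definition ve_start (L : nat) (j : Z) (e : vedge) : pt :=
  let '(a, b, o) := e in
  if o then vcell_lo L (j + 1) a b else vcell_hi L (j + 1) a b.
Definition ve_end (L : nat) (j : Z) (e : vedge) : pt :=
  let '(a, b, o) := e in
  if o then vcell_hi L (j + 1) a b else vcell_lo L (j + 1) a b.

(* consecutive edges share a vertex in X_j (i.e. modulo R_j) *)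
Fixpoint vpath_chain (L : nat) (j : Z) (es : list vedge) : Prop :=
  match es with
  | e1 :: ((e2 :: _) as rest) =>
      Rj L j (ve_end L j e1) (ve_start L j e2) /\ vpath_chain L j rest
  | _ => True
  end.

Definition on_vpath (L : nat) (j : Z) (es : list vedge) (P : pt) : Prop :=
  exists e, In e es /\
    let '(a, b, _) := e in exists q, vcell L (j + 1) a b q /\ Rj L j q P.

(* A generating pair of Phi^i_* R joins two points of a vertical
   line of Y_{i+1} that is not a line of Y_i, and both points lie in a "glue
   block": two consecutive vertical 1-cells of Y_{i+1} on that line.  Distinct
   glue blocks, at any levels, are disjoint, so every R_j-class (and every
   R_oo-class) is a point or a Phi^i_* R-class inside a single block at a single
   level i.  Such a class lies on two consecutive vertical edges of X_i^(1),
   which gives (1).  Its vertical extent 2 m_v^{-(i+1)} is smaller than the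
   height m_v^{-i} of a cell of Y_i, so two cells of levels at most i that
   touch the class already meet; when i is below the target level the class is
   already identified there.  This gives (2) and (3). *)
From Pilot Require Import Defs.
From Stdlib Require Import Reals ZArith List Relations Relation_Operators Lra Lia.
Open Scope R_scope.
Import ListNotations.

Section ClosWithinBlocks.
Variables (A I : Type) (tag : I -> A -> Prop) (Rl : I -> relation A) (G : relation A).
Hypothesis tag_unique : forall i i' x, tag i x -> tag i' x -> i = i'.
Hypothesis Rl_sym : forall i, symmetric A (Rl i).
Hypothesis Rl_trans : forall i, transitive A (Rl i).
Hypothesis G_within : forall x y, G x y -> x = y \/ exists i, tag i x /\ tag i y /\ Rl i x y.

Lemma clos_rst_within_block x y : clos_refl_sym_trans A G x y ->
  x = y \/ exists i, tag i x /\ tag i y /\ Rl i x y.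
Proof.
  induction 1 as [x y Hxy | x | x y _ IH | x y z _ IHxy _ IHyz].
  - exact (G_within x y Hxy).
  - now left.
  - destruct IH as [-> | (i & Hx & Hy & Hxy)]; [now left |].
    right; exists i; repeat split; [assumption | assumption | now apply Rl_sym].
  - destruct IHxy as [-> | (i & Hx & Hy & Hxy)]; [exact IHyz |].
    destruct IHyz as [<- | (i' & Hy' & Hz & Hyz)]; [right; now exists i |].
    pose proof (tag_unique i i' y Hy Hy'); subst i'.
    right; exists i; repeat split; [assumption | assumption | now apply Rl_trans with y].
Qed.
End ClosWithinBlocks.

Lemma IZR_powerRZ (z d : Z) : (0 <= d)%Z -> powerRZ (IZR z) d = IZR (z ^ d).
Proof. intros Hd. rewrite <- (Z2Nat.id d Hd), <- pow_powerRZ, pow_IZR. reflexivity. Qed.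

Lemma powerRZ_IZR_neg_shift (z j j' : Z) : z <> 0%Z -> (j <= j')%Z ->
  powerRZ (IZR z) (- j) = IZR (z ^ (j' - j)) * powerRZ (IZR z) (- j').
Proof.
  intros Hz Hj.
  rewrite <- IZR_powerRZ, <- powerRZ_add by (lia || now apply not_0_IZR).
  f_equal; lia.
Qed.

Lemma powerRZ_neg_succ (x : R) (j : Z) : x <> 0 ->
  powerRZ x (- (j + 1)) = powerRZ x (- j) / x.
Proof.
  intros Hx. replace (- (j + 1))%Z with (- j + -1)%Z by lia.
  rewrite powerRZ_add by exact Hx. simpl. field. exact Hx.
Qed.

Lemma IZR_mul_lt_reg (u v : Z) (h : R) : 0 < h -> IZR u * h < IZR v * h -> (u < v)%Z.
Proof. intros Hh H. apply lt_IZR, (Rmult_lt_reg_r h); assumption. Qed.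

Lemma IZR_mul_le_reg (u v : Z) (h : R) : 0 < h -> IZR u * h <= IZR v * h -> (u <= v)%Z.
Proof. intros Hh H. apply le_IZR, (Rmult_le_reg_r h); assumption. Qed.

Lemma grid_intervals_meet (u1 v1 u2 v2 : Z) (h s t : R) : 0 < h ->
  IZR u1 * h <= s <= IZR v1 * h -> IZR u2 * h <= t <= IZR v2 * h ->
  Rabs (s - t) < h ->
  exists r, IZR u1 * h <= r <= IZR v1 * h /\ IZR u2 * h <= r <= IZR v2 * h.
Proof.
  intros Hh Hs Ht Hst. apply Rabs_def2 in Hst.
  assert (u1 < v2 + 1)%Z by (apply (IZR_mul_lt_reg _ _ h); rewrite ?plus_IZR; lra).
  assert (u2 < v1 + 1)%Z by (apply (IZR_mul_lt_reg _ _ h); rewrite ?plus_IZR; lra).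
  assert (u1 <= v1)%Z by (apply (IZR_mul_le_reg _ _ h); lra).
  assert (u2 <= v2)%Z by (apply (IZR_mul_le_reg _ _ h); lra).
  assert (Hle : forall p q, (p <= q)%Z -> IZR p * h <= IZR q * h)
    by (intros; apply Rmult_le_compat_r; [lra | now apply IZR_le]).
  exists (IZR (Z.max u1 u2) * h). repeat split; apply Hle; lia.
Qed.

Lemma m_IZR : m = IZR 4.
Proof. reflexivity. Qed.

Lemma mv_IZR (L : nat) : mv L = IZR (3 * Z.of_nat L).
Proof. unfold mv. rewrite mult_IZR, <- INR_IZR_INZ. reflexivity. Qed.

Lemma powerRZ_m_pos (j : Z) : 0 < powerRZ m j.
Proof. apply powerRZ_lt. unfold m; lra. Qed.

(* The union of the vertical 1-cells (a, n) and (a, n + 1) of Y_{j+1}.  The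
   constraints on a and n say that these are the images under Phi^j of the
   segments a_{k,l,c} and a_{k,l,c} + (0, m_v^{-1}), with a = 4k + c and
   n = 3l + c - 1. *)
Definition glue_block (L : nat) (j a n : Z) (P : pt) : Prop :=
  (a mod 4 <> 0)%Z /\ (exists l, n = 3 * l + a mod 4 - 1)%Z /\
  fst P = IZR a * powerRZ m (- (j + 1)) /\
  IZR n * powerRZ (mv L) (- (j + 1)) <= snd P <= (IZR n + 2) * powerRZ (mv L) (- (j + 1)).

Lemma new_vline_not_coarser (a a' j j' : Z) : (j < j')%Z -> (a' mod 4 <> 0)%Z ->
  IZR a * powerRZ m (- j) <> IZR a' * powerRZ m (- j').
Proof.
  intros Hj Ha' E.
  rewrite m_IZR, (powerRZ_IZR_neg_shift 4 j j') in E by lia.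
  assert (E' : IZR (a * 4 ^ (j' - j)) = IZR a').
  { apply (Rmult_eq_reg_r (powerRZ (IZR 4) (- j'))).
    - rewrite mult_IZR, <- E. ring.
    - apply powerRZ_NOR; lra. }
  apply eq_IZR in E'.
  replace (j' - j)%Z with (Z.succ (j' - j - 1)) in E' by lia.
  rewrite Z.pow_succ_r in E' by lia.
  assert (Ha'4 : (a' = 4 * (a * 4 ^ (j' - j - 1)))%Z) by (rewrite <- E'; ring).
  rewrite Ha'4, Z.mul_comm, Z_mod_mult in Ha'. contradiction.
Qed.

Lemma glue_block_vpath_chain (L : nat) (j a n : Z) :
  vpath_chain L j [(a, n, true); (a, n + 1, true)]%Z.
Proof.
  cbn [vpath_chain ve_end ve_start]. unfold vcell_hi, vcell_lo.
  rewrite plus_IZR. split; [apply rst_refl | exact I].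
Qed.

Lemma glue_block_on_vpath (L : nat) (j a n : Z) (P : pt) : glue_block L j a n P ->
  on_vpath L j [(a, n, true); (a, n + 1, true)]%Z P.
Proof.
  intros (_ & _ & Hx & Hy).
  destruct (Rle_dec (snd P) ((IZR n + 1) * powerRZ (mv L) (- (j + 1)))).
  - exists (a, n, true). split; [now left |].
    exists P. split; [split; [exact Hx | lra] | apply rst_refl].
  - exists (a, (n + 1)%Z, true). split; [right; now left |].
    exists P. split; [split; [exact Hx | rewrite plus_IZR; lra] | apply rst_refl].
Qed.

Section Level.
Variable L : nat.
Hypothesis HL : (0 < L)%nat.

Lemma mv_ge_3 : 3 <= mv L.
Proof. unfold mv. pose proof (le_INR 1 L HL) as H. simpl in H. lra. Qed.

Lemma powerRZ_mv_pos (j : Z) : 0 < powerRZ (mv L) j.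
Proof. apply powerRZ_lt. pose proof mv_ge_3; lra. Qed.

Lemma powerRZ_mv_antitone (i j : Z) : (j <= i)%Z ->
  powerRZ (mv L) (- i) <= powerRZ (mv L) (- j).
Proof.
  intros Hji. rewrite mv_IZR, (powerRZ_IZR_neg_shift _ j i) by lia. rewrite <- mv_IZR.
  assert (1 <= IZR ((3 * Z.of_nat L) ^ (i - j))).
  { apply IZR_le. enough (0 < (3 * Z.of_nat L) ^ (i - j))%Z by lia.
    apply Z.pow_pos_nonneg; lia. }
  pose proof (powerRZ_mv_pos (- i)). nra.
Qed.

Lemma glue_block_unique (j j' a a' n n' : Z) (P : pt) :
  glue_block L j a n P -> glue_block L j' a' n' P -> (j, a, n) = (j', a', n').
Proof.
  intros (Ha & [l Hn] & Hx & Hy) (Ha' & [l' Hn'] & Hx' & Hy').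
  assert (Hj : j = j').
  { destruct (Z.lt_trichotomy j j') as [Hlt | [Heq | Hgt]]; [exfalso | exact Heq | exfalso].
    - apply (new_vline_not_coarser a a' (j + 1) (j' + 1)); [lia | exact Ha' | congruence].
    - apply (new_vline_not_coarser a' a (j' + 1) (j + 1)); [lia | exact Ha | congruence]. }
  subst j'.
  assert (Ha'' : a = a').
  { apply eq_IZR, (Rmult_eq_reg_r (powerRZ m (- (j + 1)))); [congruence |].
    apply Rgt_not_eq, powerRZ_m_pos. }
  subst a'.
  set (h := powerRZ (mv L) (- (j + 1))) in *.
  pose proof (powerRZ_mv_pos (- (j + 1))) as Hh; fold h in Hh.
  assert (n <= n' + 2)%Z by (apply (IZR_mul_le_reg _ _ h); rewrite ?plus_IZR; lra).
  assert (n' <= n + 2)%Z by (apply (IZR_mul_le_reg _ _ h); rewrite ?plus_IZR; lra).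
  f_equal. lia.
Qed.

Lemma R0_glue_block (p q : pt) : Defs.R0 L p q ->
  exists a n, glue_block L 0 a n p /\ glue_block L 0 a n q.
Proof.
  intros [(k & l & c & Hc & Hx & Hy) ->].
  exists (4 * k + Z.of_nat c)%Z, (3 * l + Z.of_nat c - 1)%Z.
  assert (Hmod : ((4 * k + Z.of_nat c) mod 4 = Z.of_nat c)%Z)
    by (rewrite Z.add_comm, Z.mul_comm, Z_mod_plus_full, Z.mod_small; lia).
  assert (Hconstr : ((4 * k + Z.of_nat c) mod 4 <> 0)%Z /\
    (exists l', 3 * l + Z.of_nat c - 1 = 3 * l' + (4 * k + Z.of_nat c) mod 4 - 1)%Z)
    by (rewrite Hmod; split; [lia | exists l; lia]).
  pose proof mv_ge_3 as Hmv.
  unfold glue_block. rewrite !powerRZ_neg'. change (0 + 1)%Z with (Z.succ 0).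
  rewrite !powerRZ_1, !minus_IZR, !plus_IZR, !mult_IZR, <- !INR_IZR_INZ.
  assert (Hfst : fst p = (4 * IZR k + INR c) * / m) by (rewrite Hx; unfold m; field).
  unfold Rdiv in Hy. set (u := / mv L) in *.
  assert (Hu : 0 < u) by (apply Rinv_0_lt_compat; lra).
  split; (split; [exact (proj1 Hconstr) | split; [exact (proj2 Hconstr) |]]);
    cbn [fst snd]; split; [exact Hfst | lra | exact Hfst | lra].
Qed.

Lemma Phi_pow_glue_block (i j a n : Z) (p : pt) :
  glue_block L j a n p -> glue_block L (i + j) a n (Phi_pow L i p).
Proof.
  intros (Ha & Hn & Hx & Hy). do 2 (split; [assumption |]).
  unfold Phi_pow; cbn [fst snd].
  replace (- (i + j + 1))%Z with (- i + - (j + 1))%Z by lia.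
  pose proof mv_ge_3. pose proof (powerRZ_mv_pos (- i)).
  rewrite !powerRZ_add by (unfold m; lra).
  split; [rewrite Hx; ring | split; nra].
Qed.

Lemma Phi_pow_inj (j : Z) (p q : pt) : Phi_pow L j p = Phi_pow L j q -> p = q.
Proof.
  destruct p as [x y], q as [x' y']. unfold Phi_pow; cbn [fst snd].
  intros [= Ex Ey].
  apply Rmult_eq_reg_l in Ex; [| apply Rgt_not_eq, powerRZ_m_pos].
  apply Rmult_eq_reg_l in Ey; [| apply Rgt_not_eq, powerRZ_mv_pos].
  now subst.
Qed.

Lemma PhiRel_sym (j : Z) : symmetric pt (PhiRel L j).
Proof. intros P Q (p & q & H & -> & ->). exists q, p. split; [now apply rst_sym | auto]. Qed.

Lemma PhiRel_trans (j : Z) : transitive pt (PhiRel L j).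
Proof.
  intros P Q S (p & q & Hpq & -> & ->) (q' & s & Hqs & Eq & ->).
  apply Phi_pow_inj in Eq; subst q'.
  exists p, s. split; [now apply rst_trans with q | auto].
Qed.

Lemma Rel_glue_block (p q : pt) : Rel L p q ->
  p = q \/ exists a n, glue_block L 0 a n p /\ glue_block L 0 a n q.
Proof.
  intros H.
  destruct (clos_rst_within_block pt (Z * Z) (fun '(a, n) => glue_block L 0 a n)
              (fun _ _ _ => True) (Defs.R0 L)) with p q
    as [-> | ([a n] & Hp & Hq & _)]; [| | | | exact H | now left | right; now exists a, n].
  - intros [a n] [a' n'] x Hx Hx'.
    now injection (glue_block_unique 0 0 a a' n n' x Hx Hx') as -> ->.
  - now intros.
  - now intros.
  - intros x y Hxy. right.
    destruct (R0_glue_block x y Hxy) as (a & n & Hx & Hy). now exists (a, n).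
Qed.

Lemma PhiRel_glue_block (i : Z) (P Q : pt) : PhiRel L i P Q ->
  P = Q \/ exists a n, glue_block L i a n P /\ glue_block L i a n Q.
Proof.
  intros (p & q & H & -> & ->).
  destruct (Rel_glue_block p q H) as [-> | (a & n & Hp & Hq)]; [now left | right].
  exists a, n. rewrite <- (Z.add_0_r i) at 1 3. split; now apply Phi_pow_glue_block.
Qed.

Lemma clos_PhiRel_glue_block (S : Z -> Prop) (G : relation pt) :
  (forall P Q, G P Q -> exists i, S i /\ PhiRel L i P Q) ->
  forall P Q, clos_refl_sym_trans pt G P Q ->
  P = Q \/ exists i a n, S i /\ PhiRel L i P Q /\
                         glue_block L i a n P /\ glue_block L i a n Q.
Proof.
  intros HG P Q H.
  destruct (clos_rst_within_block pt (Z * Z * Z)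
              (fun '(i, a, n) P => S i /\ glue_block L i a n P)
              (fun '(i, _, _) => PhiRel L i) G) with P Q
    as [-> | ([[i a] n] & [Si HP] & [_ HQ] & HPQ)];
    [| | | | exact H | now left | right; now exists i, a, n].
  - intros [[i a] n] [[i' a'] n'] x [_ Hx] [_ Hx'].
    exact (glue_block_unique i i' a a' n n' x Hx Hx').
  - intros [[i a] n]. apply PhiRel_sym.
  - intros [[i a] n]. apply PhiRel_trans.
  - intros x y Hxy. destruct (HG x y Hxy) as (i & Si & Hi).
    destruct (PhiRel_glue_block i x y Hi) as [-> | (a & n & Hx & Hy)]; [now left | right].
    now exists (i, a, n).
Qed.

Lemma glue_block_close (i a n : Z) (x y : pt) :
  glue_block L i a n x -> glue_block L i a n y ->
  fst x = fst y /\ Rabs (snd x - snd y) < powerRZ (mv L) (- i).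
Proof.
  intros (_ & _ & Hx & Hyx) (_ & _ & Hx' & Hyy). split; [congruence |].
  pose proof mv_ge_3 as Hmv.
  rewrite powerRZ_neg_succ in Hyx, Hyy by lra.
  pose proof (powerRZ_mv_pos (- i)) as Hp.
  set (h := powerRZ (mv L) (- i) / mv L) in *.
  assert (Hh : powerRZ (mv L) (- i) = mv L * h) by (unfold h; field; lra).
  assert (0 < h) by (unfold h; apply Rdiv_lt_0_compat; lra).
  rewrite Hh. apply Rabs_def1; nra.
Qed.

Lemma cell2_meet (j j' a b a' b' : Z) (x y : pt) : (j <= j')%Z ->
  cell2 L j a b x -> cell2 L j' a' b' y -> fst x = fst y ->
  Rabs (snd x - snd y) < powerRZ (mv L) (- j') ->
  exists z, cell2 L j a b z /\ cell2 L j' a' b' z.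
Proof.
  intros Hj (Hx1 & Hy1) (Hx2 & Hy2) Hfst Hsnd.
  assert (Hsplit : powerRZ (mv L) (- j) =
                   IZR ((3 * Z.of_nat L) ^ (j' - j)) * powerRZ (mv L) (- j'))
    by (rewrite mv_IZR; apply powerRZ_IZR_neg_shift; lia).
  set (N := ((3 * Z.of_nat L) ^ (j' - j))%Z) in *.
  set (h := powerRZ (mv L) (- j')) in *.
  rewrite Hsplit in Hy1.
  destruct (grid_intervals_meet (b * N) ((b + 1) * N) b' (b' + 1) h (snd x) (snd y))
    as (r & Hr1 & Hr2); rewrite ?mult_IZR, ?plus_IZR in *;
    [apply powerRZ_mv_pos | lra | lra | exact Hsnd |].
  exists (fst x, r). unfold cell2; rewrite Hsplit; cbn [fst snd].
  rewrite Hfst in Hx1 |- *. split; split; (assumption || lra).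
Qed.

Lemma cell2_meet_mod_Rj (S : Z -> Prop) (G : relation pt) (j j' a b a' b' : Z) (x y : pt) :
  (forall P Q, G P Q -> exists i, S i /\ PhiRel L i P Q) -> (j <= j')%Z ->
  cell2 L j a b x -> cell2 L j' a' b' y -> clos_refl_sym_trans pt G x y ->
  exists x' y', cell2 L j a b x' /\ cell2 L j' a' b' y' /\ Rj L j' x' y'.
Proof.
  intros HG Hj Hx Hy Hxy.
  destruct (clos_PhiRel_glue_block S G HG x y Hxy)
    as [<- | (i & a0 & n & _ & HPhi & Hbx & Hby)].
  { exists x, x. split; [| split]; [assumption | assumption | apply rst_refl]. }
  destruct (Z_lt_le_dec i j') as [Hi | Hi].
  - exists x, y. split; [| split]; [assumption | assumption |].
    apply rst_step. now exists i.
  - destruct (glue_block_close i a0 n x y Hbx Hby) as [Hfst Hsnd].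
    destruct (cell2_meet j j' a b a' b' x y Hj Hx Hy Hfst) as (z & Hz & Hz').
    { pose proof (powerRZ_mv_antitone i j' Hi). lra. }
    exists z, z. split; [| split]; [assumption | assumption | apply rst_refl].
Qed.

End Level.

Theorem mainTheorem4 (L : nat) (HL : (100 <= L)%nat) :
  (* (1) *)
  (forall (j : Z) (P P' : pt),
      ~ Rj L j P P' -> Rj L (j + 1) P P' ->
      exists es : list vedge,
        (length es <= 2)%nat /\ vpath_chain L j es /\
        on_vpath L j es P /\ on_vpath L j es P') /\
  (* (2) *)
  (forall (j a b a' b' : Z),
      (exists x y, cell2 L j a b x /\ cell2 L j a' b' y /\ Rj L (j + 1) x y) ->
      exists x y, cell2 L j a b x /\ cell2 L j a' b' y /\ Rj L j x y) /\
  (* (3) *)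
  (forall (j j' a b a' b' : Z), (j <= j')%Z ->
      (exists x y, cell2 L j a b x /\ cell2 L j' a' b' y /\ Rinf L x y) ->
      exists x y, cell2 L j a b x /\ cell2 L j' a' b' y /\ Rj L j' x y).
Proof.
  assert (HL1 : (0 < L)%nat) by lia.
  split; [| split].
  - intros j P P' Hnot HR.
    destruct (clos_PhiRel_glue_block L HL1 (fun i => (i < j + 1)%Z) _
                (fun _ _ H => H) P P' HR)
      as [<- | (i & a & n & Hi & HPhi & HP & HP')].
    { contradiction (Hnot (rst_refl _ _ P)). }
    destruct (Z.lt_ge_cases i j) as [Hlt | Hge].
    { contradiction Hnot. apply rst_step. now exists i. }
    replace i with j in * by lia.
    exists [(a, n, true); (a, n + 1, true)]%Z.
    split; [simpl; lia | split; [apply glue_block_vpath_chain |]].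
    split; now apply glue_block_on_vpath.
  - intros j a b a' b' (x & y & Hx & Hy & Hxy).
    exact (cell2_meet_mod_Rj L HL1 _ _ j j a b a' b' x y
             (fun _ _ H => H) (Z.le_refl j) Hx Hy Hxy).
  - intros j j' a b a' b' Hj (x & y & Hx & Hy & Hxy).
    apply (cell2_meet_mod_Rj L HL1 (fun _ => True) (fun P Q => exists i, PhiRel L i P Q)
             j j' a b a' b' x y); [| assumption ..].
    intros P Q [i Hi]. now exists i.
Qed.
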